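(* Let $(\mathcal A,\mathcal H,D)_\sigma$ be a twisted spectral triple and $e\in M_q(\mathcal A)$ an idempotent with $\sigma(e)=e^*$. Let $\mathcal E=e\mathcal A^q$ with its canonical $\sigma$-translation $\mathcal E^\sigma=\sigma(e)\mathcal A^q$, $\sigma^{\mathcal E}((\xi_j))=(\sigma(\xi_j))$, let $(\cdot,\cdot)_{\mathcal E}$ be a Hermitian metric on $\mathcal E$, and let $\mathfrak s:\mathcal E^\sigma\to\mathcal E$ be the unique $\mathcal A$-linear isomorphism with $(\mathfrak s\eta,\xi)_{\mathcal E}=(\eta,\xi)_0$ for all $\eta\in\mathcal E^\sigma,\xi\in\mathcal E$. Then $\{(\cdot,\cdot)_{\mathcal E},\mathfrak s\}$ is a $\sigma$-Hermitian structure on $\mathcal E$, and the Grassmannian $\sigma$-connection $\nabla_0^{\mathcal E}\xi=\sigma(e)\big(d_\sigma\xi_j\big)_{j=1}^q$ is a $\sigma$-Hermitian $\sigma$-connection on $\mathcal E$.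
   Context: Twisted spectral triple: $\mathbb Z_2$-graded $\mathcal H$, unital involutive algebra $\mathcal A$ closed under holomorphic functional calculus acting by even bounded operators, automorphism $\sigma$ with $\sigma(a)^*=\sigma^{-1}(a^* )$, odd selfadjoint $D$ with compact resolvent, $a(\mathrm{dom}D)\subset\mathrm{dom}D$ and $[D,a]_\sigma=Da-\sigma(a)D$ bounded. $(\xi,\eta)_0=\sum_j\xi_j^*\eta_j$ is the canonical metric on $\mathcal A^q$. $\Omega^1_{D,\sigma}(\mathcal A)=\mathrm{span}\{a[D,b]_\sigma\}$, $d_\sigma a=[D,a]_\sigma$; $\sigma(e)\mathcal A^q\otimes_{\mathcal A}\Omega^1_{D,\sigma}(\mathcal A)$ is identified with $\sigma(e)\Omega^1_{D,\sigma}(\mathcal A)^q$. A $\sigma$-connection is a $\mathbb C$-linear $\nabla:\mathcal E\to\mathcal E^\sigma\otimes_{\mathcal A}\Omega^1_{D,\sigma}(\mathcal A)$ with $\nabla(\xi a)=(\nabla\xi)a+\sigma^{\mathcal E}(\xi)\otimes d_\sigma a$. A Hermitian metric is $(\cdot,\cdot):\mathcal E\times\mathcal E\to\mathcal A$ with $(\xi a,\eta b)=a^*(\xi,\eta)b$, biadditive, positive, nondegenerate. A $\sigma$-Hermitian structure is a Hermitian metric with a right-module isomorphism $\mathfrak s:\mathcal E^\sigma\to\mathcal E$ such that $(\xi_1,\mathfrak s\sigma^{\mathcal E}(\xi_2))=\sigma((\mathfrak s\sigma^{\mathcal E}(\xi_1),\xi_2))$. A $\sigma$-connection is $\sigma$-Hermitian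 if for all $\xi,\eta\in\mathcal E$, writing $\nabla\xi=\sum\xi_\alpha\otimes\omega_\alpha$, $\nabla\eta=\sum\eta_\beta\otimes\psi_\beta$, $\sum_\beta(\xi,\mathfrak s\eta_\beta)\psi_\beta-\sum_\alpha\omega_\alpha^*(\mathfrak s\xi_\alpha,\eta)=d_\sigma\big((\mathfrak s\sigma^{\mathcal E}(\xi),\eta)\big)$. *)

From HB Require Import structures.
From mathcomp Require Import all_boot all_order all_algebra.
Set Implicit Arguments. Unset Strict Implicit. Unset Printing Implicit Defensive.
Import Order.TTheory GRing.Theory Num.Theory.
Local Open Scope ring_scope.

Section TwistedSpectralTriple.
Variable C : numClosedFieldType.   (* stand-in for the complex numbers *)

Record is_involution (A : algType C) (st : A -> A) : Prop := {
  inv_invol : involutive st;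
  inv_add : forall x y, st (x + y) = st x + st y;
  inv_mul : forall x y, st (x * y) = st y * st x;
  inv_scale : forall (k : C) x, st (k *: x) = k^* *: st x }.

Definition positive (B : algType C) (stB : B -> B) (b : B) : Prop :=
  exists s : seq B, b = \sum_(c <- s) stB c * c.

Variables (A B : algType C).
(* A: the involutive algebra; B: bounded operators on H, with adjoint stB;
   pi: the (faithful) representation of A on H; d: a |-> [D,a]_sigma. *)
Variables (stA : A -> A) (stB : B -> B) (pi : A -> B).
Variables (sigma sigma_inv : A -> A) (d : A -> B).

(* The algebraic data induced by a twisted spectral triple (A,H,D)_sigma. *)
Record twisted_calculus : Prop := {
  tc_stA : is_involution stA;
  tc_stB : is_involution stB;
  tc_pi_inj : injective pi;
  tc_pi1 : pi 1 = 1;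
  tc_piD : forall x y, pi (x + y) = pi x + pi y;
  tc_piM : forall x y, pi (x * y) = pi x * pi y;
  tc_piZ : forall (k : C) x, pi (k *: x) = k *: pi x;
  tc_pi_star : forall x, pi (stA x) = stB (pi x);
  tc_sigmaK : cancel sigma sigma_inv;
  tc_sigma_invK : cancel sigma_inv sigma;
  tc_sigma1 : sigma 1 = 1;
  tc_sigmaD : forall x y, sigma (x + y) = sigma x + sigma y;
  tc_sigmaM : forall x y, sigma (x * y) = sigma x * sigma y;
  tc_sigmaZ : forall (k : C) x, sigma (k *: x) = k *: sigma x;
  tc_sigma_star : forall a, stA (sigma a) = sigma_inv (stA a);
  (* d a = [D,a]_sigma = D a - sigma(a) D (bounded) *)
  tc_dD : forall a b, d (a + b) = d a + d b;
  tc_dZ : forall (k : C) a, d (k *: a) = k *: d a;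
  tc_dM : forall a b, d (a * b) = d a * pi b + pi (sigma a) * d b;
  (* consequence of D selfadjoint: adjoint of [D,a]_sigma is - [D, sigma^-1(a^star)]_sigma *)
  tc_d_star : forall a, stB (d a) = - (d (sigma_inv (stA a))) }.

Definition Omega1 (w : B) : Prop :=
  exists s : seq (A * A), w = \sum_(p <- s) pi p.1 * d p.2.

Variable q : nat.
Variable e : 'M[A]_q.

Definition sigma_mx (m : 'M[A]_q) : 'M[A]_q := map_mx sigma m.
Definition star_mx (m : 'M[A]_q) : 'M[A]_q := (map_mx stA m)^T.

(* E = e A^q  and  E^sigma = sigma(e) A^q  (column vectors) *)
Definition in_E (xi : 'cV[A]_q) : Prop := e *m xi = xi.
Definition in_Esig (eta : 'cV[A]_q) : Prop := sigma_mx e *m eta = eta.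
Definition rmul (xi : 'cV[A]_q) (a : A) : 'cV[A]_q := map_mx (fun x => x * a) xi.
Definition sigmaE (xi : 'cV[A]_q) : 'cV[A]_q := map_mx sigma xi.
Definition h0 (xi eta : 'cV[A]_q) : A := \sum_j stA (xi j ord0) * eta j ord0.

Definition hermitian_metric (h : 'cV[A]_q -> 'cV[A]_q -> A) : Prop :=
  [/\ forall xi eta a b, in_E xi -> in_E eta ->
        h (rmul xi a) (rmul eta b) = stA a * h xi eta * b,
      forall xi1 xi2 eta, in_E xi1 -> in_E xi2 -> in_E eta ->
        h (xi1 + xi2) eta = h xi1 eta + h xi2 eta
        /\ h eta (xi1 + xi2) = h eta xi1 + h eta xi2,
      forall xi, in_E xi -> positive stB (pi (h xi xi))
    & forall xi, in_E xi -> (forall eta, in_E eta -> h xi eta = 0) -> xi = 0].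

Definition module_iso (s : 'cV[A]_q -> 'cV[A]_q) : Prop :=
  [/\ forall eta, in_Esig eta -> in_E (s eta),
      forall eta1 eta2, in_Esig eta1 -> in_Esig eta2 -> s (eta1 + eta2) = s eta1 + s eta2,
      forall eta a, in_Esig eta -> s (rmul eta a) = rmul (s eta) a,
      forall eta1 eta2, in_Esig eta1 -> in_Esig eta2 -> s eta1 = s eta2 -> eta1 = eta2
    & forall xi, in_E xi -> exists2 eta, in_Esig eta & s eta = xi].

Definition sigma_hermitian_structure (h : 'cV[A]_q -> 'cV[A]_q -> A)
    (s : 'cV[A]_q -> 'cV[A]_q) : Prop :=
  [/\ hermitian_metric h, module_iso s
    & forall xi1 xi2, in_E xi1 -> in_E xi2 ->
        h xi1 (s (sigmaE xi2)) = sigma (h (s (sigmaE xi1)) xi2)].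

(* E^sigma (x)_A Omega^1 is identified with sigma(e) Omega^1(A)^q, via
   eta (x) w |-> (eta_j w)_j *)
Definition in_tensor (v : 'cV[B]_q) : Prop :=
  map_mx pi (sigma_mx e) *m v = v /\ forall j, Omega1 (v j ord0).
Definition tens (eta : 'cV[A]_q) (w : B) : 'cV[B]_q := \col_j (pi (eta j ord0) * w).
Definition rmulB (v : 'cV[B]_q) (a : A) : 'cV[B]_q := map_mx (fun x => x * pi a) v.

Definition sigma_connection (nabla : 'cV[A]_q -> 'cV[B]_q) : Prop :=
  [/\ forall xi, in_E xi -> in_tensor (nabla xi),
      forall xi1 xi2, in_E xi1 -> in_E xi2 -> nabla (xi1 + xi2) = nabla xi1 + nabla xi2,
      forall (k : C) xi, in_E xi ->
        nabla (map_mx ( *:%R k) xi) = map_mx ( *:%R k) (nabla xi)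
    & forall xi a, in_E xi ->
        nabla (rmul xi a) = rmulB (nabla xi) a + tens (sigmaE xi) (d a)].

Definition represents (r : seq ('cV[A]_q * B)) (v : 'cV[B]_q) : Prop :=
  (forall p, p \in r -> in_Esig p.1 /\ Omega1 p.2) /\
  v = \sum_(p <- r) tens p.1 p.2.

Definition sigma_hermitian_connection (h : 'cV[A]_q -> 'cV[A]_q -> A)
    (s : 'cV[A]_q -> 'cV[A]_q) (nabla : 'cV[A]_q -> 'cV[B]_q) : Prop :=
  forall xi eta (rx ry : seq ('cV[A]_q * B)), in_E xi -> in_E eta ->
    represents rx (nabla xi) -> represents ry (nabla eta) ->
    \sum_(p <- ry) pi (h xi (s p.1)) * p.2
      - \sum_(p <- rx) stB p.2 * pi (h (s p.1) eta)
    = d (h (s (sigmaE xi)) eta).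

Definition grassmann_connection (xi : 'cV[A]_q) : 'cV[B]_q :=
  map_mx pi (sigma_mx e) *m map_mx d xi.

End TwistedSpectralTriple.

From HB Require Import structures.
From mathcomp Require Import all_boot all_order all_algebra.
Import GRing.Theory.
Local Open Scope ring_scope.
Set Implicit Arguments. Unset Strict Implicit.

(* The argument has three parts.
   1. Any Hermitian metric h on E = eA^q is conjugate-symmetric,
      h(y,x) = h(x,y)^*.  By positivity h(z,z) is selfadjoint; polarising
      with z = x + y and z = x.i + y (i the imaginary unit of C) gives the
      symmetry.  Hence the defining property (s eta, xi) = (eta, xi)_0 of s
      also holds on the right: (xi, s eta) = (xi, eta)_0.
   2. With both identities the sigma-Hermitian structure condition reduces
      to sigma((sigma xi1, xi2)_0) = (xi1, sigma xi2)_0, which follows from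
      sigma(a)^* = sigma^-1(a^* ).
   3. For nabla_0 xi = sigma(e)(d xi_j)_j, the sigma-connection axioms are
      direct matrix computations using sigma(e) sigma(e) = sigma(e).  For
      the Hermiticity identity, both sums in its left-hand side do not depend
      on the chosen representations of nabla_0 xi and nabla_0 eta: they equal
      sum_k xi_k^* d(eta_k) and - sum_k d(sigma^-1(xi_k^* )) eta_k, using
      e xi = xi, e eta = eta and sigma(e) = e^*.  Their difference is
      d((sigma xi, eta)_0) by the twisted Leibniz rule. *)

Lemma additive_sum (U V : zmodType) (g : U -> V) :
    (forall x y, g (x + y) = g x + g y) ->
  forall (I : Type) (r : seq I) (P : pred I) (F : I -> U),
    g (\sum_(i <- r | P i) F i) = \sum_(i <- r | P i) g (F i).
Proof.
move=> gD I r P F; apply: (big_morph _ gD).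
by apply: (@addrI _ (g 0)); rewrite -gD !addr0.
Qed.

Lemma involution1 (C : numClosedFieldType) (A : algType C) (st : A -> A) :
  is_involution st -> st 1 = 1.
Proof.
by case=> stK _ stM _; have := stM 1 (st 1); rewrite mul1r stK mul1r.
Qed.

Lemma positive_selfadjoint (C : numClosedFieldType) (B : algType C)
    (st : B -> B) (b : B) :
  is_involution st -> positive st b -> st b = b.
Proof.
case=> stK stD stM _ [cs ->]; rewrite (additive_sum stD).
by apply: eq_bigr => c _; rewrite stM stK.
Qed.

Section TwistedCalculus.
Variables (C : numClosedFieldType) (A B : algType C).
Variables (stA : A -> A) (stB : B -> B) (pi : A -> B).
Variables (sigma sigma_inv : A -> A) (d : A -> B).
Hypothesis tc : twisted_calculus stA stB pi sigma sigma_inv d.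

Lemma pi_sum I r (P : pred I) (F : I -> A) :
  pi (\sum_(i <- r | P i) F i) = \sum_(i <- r | P i) pi (F i).
Proof. exact (additive_sum (tc_piD tc) r P F). Qed.

Lemma stA_sum I r (P : pred I) (F : I -> A) :
  stA (\sum_(i <- r | P i) F i) = \sum_(i <- r | P i) stA (F i).
Proof. exact (additive_sum (inv_add (tc_stA tc)) r P F). Qed.

Lemma stB_sum I r (P : pred I) (F : I -> B) :
  stB (\sum_(i <- r | P i) F i) = \sum_(i <- r | P i) stB (F i).
Proof. exact (additive_sum (inv_add (tc_stB tc)) r P F). Qed.

Lemma sigma_sum I r (P : pred I) (F : I -> A) :
  sigma (\sum_(i <- r | P i) F i) = \sum_(i <- r | P i) sigma (F i).
Proof. exact (additive_sum (tc_sigmaD tc) r P F). Qed.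

Lemma d_sum I r (P : pred I) (F : I -> A) :
  d (\sum_(i <- r | P i) F i) = \sum_(i <- r | P i) d (F i).
Proof. exact (additive_sum (tc_dD tc) r P F). Qed.

Lemma sigma_star_sigma a : sigma (stA (sigma a)) = stA a.
Proof. by rewrite (tc_sigma_star tc) (tc_sigma_invK tc). Qed.

Lemma h0_conj q (x y : 'cV[A]_q) : stA (h0 stA x y) = h0 stA y x.
Proof.
rewrite /h0 stA_sum; apply: eq_bigr => j _.
by rewrite (inv_mul (tc_stA tc)) (inv_invol (tc_stA tc)).
Qed.

Lemma sigma_map_mul m n k (M : 'M[A]_(m, n)) (N : 'M[A]_(n, k)) :
  map_mx sigma (M *m N) = map_mx sigma M *m map_mx sigma N.
Proof.
apply/matrixP => i j; rewrite !mxE sigma_sum; apply: eq_bigr => l _.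
by rewrite !mxE (tc_sigmaM tc).
Qed.

Lemma pi_map_mul m n k (M : 'M[A]_(m, n)) (N : 'M[A]_(n, k)) :
  map_mx pi (M *m N) = map_mx pi M *m map_mx pi N.
Proof.
apply/matrixP => i j; rewrite !mxE pi_sum; apply: eq_bigr => l _.
by rewrite !mxE (tc_piM tc).
Qed.

Section Module.
Variables (q : nat) (e : 'M[A]_q).

Lemma in_E_entry xi : in_E e xi -> forall j, \sum_l e j l * xi l ord0 = xi j ord0.
Proof. by move=> exi j; rewrite -{2}exi mxE. Qed.

Lemma in_E_add x y : in_E e x -> in_E e y -> in_E e (x + y).
Proof. by move=> ex ey; rewrite /in_E mulmxDr ex ey. Qed.

Lemma in_E_rmul xi a : in_E e xi -> in_E e (rmul xi a).
Proof.
move=> exi; rewrite /in_E -{2}exi; apply/matrixP => j k.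
rewrite !mxE mulr_suml; apply: eq_bigr => l _; by rewrite !mxE mulrA.
Qed.

Lemma sigmaE_in_Esig xi : in_E e xi -> in_Esig sigma e (sigmaE sigma xi).
Proof. by move=> exi; rewrite /in_Esig /sigmaE /sigma_mx -sigma_map_mul exi. Qed.

Section Metric.
Variable h : 'cV[A]_q -> 'cV[A]_q -> A.
Hypothesis hm : hermitian_metric stA stB pi e h.

Lemma metric_selfadjoint z : in_E e z -> stA (h z z) = h z z.
Proof.
case: hm => _ _ hpos _ ez; apply: (tc_pi_inj tc).
by rewrite (tc_pi_star tc) (positive_selfadjoint (tc_stB tc) (hpos z ez)).
Qed.

(* Polarisation of selfadjointness along z = x + y. *)
Lemma metric_polar x y : in_E e x -> in_E e y ->
  stA (h x y) + stA (h y x) = h x y + h y x.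
Proof.
move=> ex ey; case: (hm) => _ hadd _ _.
have exy := in_E_add ex ey; have := metric_selfadjoint exy.
case: (hadd x y (x + y) ex ey exy) => -> _.
case: (hadd x y x ex ey ex) => _ ->; case: (hadd x y y ex ey ey) => _ ->.
rewrite !(inv_add (tc_stA tc)) (metric_selfadjoint ex) (metric_selfadjoint ey).
by rewrite -!addrA => /addrI; rewrite !addrA => /addIr.
Qed.

(* A Hermitian metric is conjugate-symmetric: polarise along x.i + y too. *)
Lemma metric_conj_sym x y : in_E e x -> in_E e y -> h y x = stA (h x y).
Proof.
move=> ex ey; case: (hm) => hsesq _ _ _.
have st1 := involution1 (tc_stA tc).
have rmul1 (z : 'cV[A]_q) : rmul z 1 = z by apply/matrixP => j k; rewrite !mxE mulr1.
pose xi := rmul x ('i *: 1); have exi : in_E e xi := in_E_rmul _ ex.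
have hxi_l : h xi y = 'i^* *: h x y.
  by have := hsesq x y ('i *: 1) 1 ex ey; rewrite rmul1 mulr1 (inv_scale (tc_stA tc))
    st1 -scalerAl mul1r.
have hxi_r : h y xi = 'i *: h y x.
  by have := hsesq y x 1 ('i *: 1) ey ex; rewrite rmul1 st1 mul1r -scalerAr mulr1.
have sum_eq := metric_polar ex ey.
have diff_eq : stA (h x y) - stA (h y x) = h y x - h x y.
  have := metric_polar exi ey; rewrite hxi_l hxi_r !(inv_scale (tc_stA tc)).
  rewrite Num.Theory.conjCK Num.Theory.conjCi !scaleNr => E.
  apply: (can_inj (scalerK (Num.Theory.neq0Ci C))).
  by rewrite !scalerBr E addrC.
have twice : stA (h x y) *+ 2 = h y x *+ 2.
  rewrite mulr2n -[LHS]addr0 -(subrr (stA (h y x))) addrACA sum_eq diff_eq.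
  by rewrite (addrC (h x y)) addrACA subrr addr0 mulr2n.
apply/esym; move: twice; rewrite -!scaler_nat => /(can_inj (scalerK _)); apply.
by rewrite Num.Theory.pnatr_eq0.
Qed.

Variable s : 'cV[A]_q -> 'cV[A]_q.
Hypothesis s_iso : module_iso sigma e s.
Hypothesis s_left : forall eta xi, in_Esig sigma e eta -> in_E e xi ->
  h (s eta) xi = h0 stA eta xi.

Lemma s_right eta xi : in_Esig sigma e eta -> in_E e xi ->
  h xi (s eta) = h0 stA xi eta.
Proof.
move=> eeta exi; case: s_iso => sE _ _ _ _.
by rewrite metric_conj_sym ?s_left ?h0_conj //; exact: sE.
Qed.

Lemma sigma_hermitian_structure_canonical :
  sigma_hermitian_structure stA stB pi sigma e h s.
Proof.
split=> // x1 x2 e1 e2.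
rewrite (s_right (sigmaE_in_Esig e2) e1) (s_left (sigmaE_in_Esig e1) e2) /h0 sigma_sum.
by apply: eq_bigr => j _; rewrite !mxE (tc_sigmaM tc) sigma_star_sigma.
Qed.

End Metric.

Hypothesis e_idem : e *m e = e.
Hypothesis e_sigma : sigma_mx sigma e = star_mx stA e.

Lemma sigma_e_entry j k : sigma (e j k) = stA (e k j).
Proof. by have := congr1 (fun M : 'M[A]_q => M j k) e_sigma; rewrite /= !mxE. Qed.

Local Notation nabla0 := (grassmann_connection pi sigma d e).

Lemma grassmann_entry xi j k :
  nabla0 xi j k = \sum_l pi (sigma (e j l)) * d (xi l k).
Proof. by rewrite /grassmann_connection mxE; apply: eq_bigr => l _; rewrite !mxE. Qed.

Lemma grassmann_leibniz xi a : in_E e xi ->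
  nabla0 (rmul xi a) = rmulB pi (nabla0 xi) a + tens pi (sigmaE sigma xi) (d a).
Proof.
move=> exi; apply/matrixP => j c; rewrite (ord1 c).
rewrite grassmann_entry [in RHS]mxE /rmulB /tens [X in X + _]mxE [X in _ + X]mxE.
rewrite grassmann_entry mxE.
under eq_bigr do rewrite mxE (tc_dM tc) mulrDr.
rewrite big_split mulr_suml; congr (_ + _).
  by apply: eq_bigr => l _; rewrite mulrA.
rewrite -(in_E_entry exi j) sigma_sum pi_sum mulr_suml; apply: eq_bigr => l _.
by rewrite (tc_sigmaM tc) (tc_piM tc) mulrA.
Qed.

Lemma grassmann_sigma_connection : sigma_connection pi sigma d e nabla0.
Proof.
split.
- move=> xi exi; split.
    by rewrite /grassmann_connection mulmxA -pi_map_mul /sigma_mx -sigma_map_mul e_idem.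
  move=> j; exists [seq (sigma (e j l), xi l ord0) | l <- index_enum 'I_q].
  by rewrite grassmann_entry big_map.
- move=> x1 x2 _ _; apply/matrixP => j k.
  rewrite [in RHS]mxE !grassmann_entry -big_split; apply: eq_bigr => l _.
  by rewrite mxE (tc_dD tc) mulrDr.
- move=> k xi _; apply/matrixP => j c.
  rewrite [in RHS]mxE !grassmann_entry scaler_sumr; apply: eq_bigr => l _.
  by rewrite mxE (tc_dZ tc) scalerAr.
- exact: grassmann_leibniz.
Qed.

Section Hermiticity.
Variables (h : 'cV[A]_q -> 'cV[A]_q -> A) (s : 'cV[A]_q -> 'cV[A]_q).
Hypothesis hm : hermitian_metric stA stB pi e h.
Hypothesis s_iso : module_iso sigma e s.
Hypothesis s_left : forall eta xi, in_Esig sigma e eta -> in_E e xi ->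
  h (s eta) xi = h0 stA eta xi.

Lemma hermitian_sum_right xi eta ry :
  in_E e xi -> represents pi sigma d e ry (nabla0 eta) ->
  \sum_(p <- ry) pi (h xi (s p.1)) * p.2
    = \sum_k pi (stA (xi k ord0)) * d (eta k ord0).
Proof.
move=> exi [ryE ryN].
transitivity (\sum_(p <- ry) \sum_j pi (stA (xi j ord0)) * (pi (p.1 j ord0) * p.2)).
  apply: eq_big_seq => p pin; rewrite (s_right hm s_iso s_left (ryE p pin).1 exi).
  by rewrite /h0 pi_sum mulr_suml; apply: eq_bigr => j _; rewrite (tc_piM tc) mulrA.
rewrite exchange_big /=.
transitivity (\sum_j pi (stA (xi j ord0)) * nabla0 eta j ord0).
  apply: eq_bigr => j _; rewrite ryN summxE mulr_sumr; apply: eq_bigr => p _.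
  by rewrite mxE.
rewrite (eq_bigr (fun j =>
  \sum_k pi (stA (xi j ord0)) * (pi (sigma (e j k)) * d (eta k ord0))));
  last by move=> j _; rewrite grassmann_entry mulr_sumr.
rewrite exchange_big /=; apply: eq_bigr => k _.
rewrite -(in_E_entry exi k) stA_sum pi_sum mulr_suml; apply: eq_bigr => j _.
by rewrite mulrA -(tc_piM tc) (inv_mul (tc_stA tc)) sigma_e_entry.
Qed.

(* The second sum, for any representation of nabla_0 xi; D selfadjoint enters
   through d(a)^* = - d(sigma^-1(a^* )). *)
Lemma hermitian_sum_left xi eta rx :
  in_E e eta -> represents pi sigma d e rx (nabla0 xi) ->
  \sum_(p <- rx) stB p.2 * pi (h (s p.1) eta)
    = - \sum_k d (sigma_inv (stA (xi k ord0))) * pi (eta k ord0).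
Proof.
move=> eeta [rxE rxN].
transitivity (\sum_(p <- rx) \sum_j stB (pi (p.1 j ord0) * p.2) * pi (eta j ord0)).
  apply: eq_big_seq => p pin; rewrite (s_left (rxE p pin).1 eeta) /h0 pi_sum mulr_sumr.
  apply: eq_bigr => j _.
  by rewrite (inv_mul (tc_stB tc)) -(tc_pi_star tc) (tc_piM tc) mulrA.
rewrite exchange_big /=.
transitivity (\sum_j stB (nabla0 xi j ord0) * pi (eta j ord0)).
  apply: eq_bigr => j _; rewrite rxN summxE stB_sum mulr_suml; apply: eq_bigr => p _.
  by rewrite mxE.
rewrite (eq_bigr (fun j =>
  \sum_k stB (pi (sigma (e j k)) * d (xi k ord0)) * pi (eta j ord0)));
  last by move=> j _; rewrite grassmann_entry stB_sum mulr_suml.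
rewrite exchange_big /= -sumrN; apply: eq_bigr => k _.
rewrite -(in_E_entry eeta k) pi_sum mulr_sumr -sumrN; apply: eq_bigr => j _.
rewrite (inv_mul (tc_stB tc)) (tc_d_star tc) -(tc_pi_star tc) sigma_e_entry.
by rewrite (inv_invol (tc_stA tc)) (tc_piM tc) mulrA !mulNr.
Qed.

Lemma grassmann_sigma_hermitian :
  sigma_hermitian_connection stB pi sigma d e h s nabla0.
Proof.
move=> xi eta rx ry exi eeta rxN ryN.
rewrite (hermitian_sum_right exi ryN) (hermitian_sum_left eeta rxN) opprK -big_split.
rewrite (s_left (sigmaE_in_Esig exi) eeta) /h0 d_sum; apply: eq_bigr => k _.
by rewrite mxE (tc_dM tc) (tc_sigma_star tc) (tc_sigma_invK tc) addrC.
Qed.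

End Hermiticity.
End Module.
End TwistedCalculus.

Unset Implicit Arguments.

Theorem lemma6p2 (C : numClosedFieldType) (A B : algType C)
    (stA : A -> A) (stB : B -> B) (pi : A -> B)
    (sigma sigma_inv : A -> A) (d : A -> B)
    (q : nat) (e : 'M[A]_q)
    (h : 'cV[A]_q -> 'cV[A]_q -> A) (s : 'cV[A]_q -> 'cV[A]_q) :
  twisted_calculus stA stB pi sigma sigma_inv d ->
  e *m e = e ->
  sigma_mx sigma e = star_mx stA e ->
  hermitian_metric stA stB pi e h ->
  module_iso sigma e s ->
  (forall eta xi, in_Esig sigma e eta -> in_E e xi -> h (s eta) xi = h0 stA eta xi) ->
  sigma_hermitian_structure stA stB pi sigma e h s /\
  sigma_connection pi sigma d e (grassmann_connection pi sigma d e) /\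
  sigma_hermitian_connection stB pi sigma d e h s (grassmann_connection pi sigma d e).
Proof.
move=> tc e_idem e_sigma hm s_iso s_left.
split; first exact (sigma_hermitian_structure_canonical tc hm s_iso s_left).
split; first exact (grassmann_sigma_connection tc e_idem).
exact (grassmann_sigma_hermitian tc e_sigma hm s_iso s_left).
Qed.
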